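(* Let $\mathcal G=((V,E),(V_1,V_2,V_\Diamond),\delta,w)$ be a stochastic game and $\varphi$ a bounded prefix-independent objective. Consider the classes of the expected value vector $\mathsf r^*=(\mathbb{E}_v(\varphi))_{v\in V}$, and suppose exactly $m\ge1$ of them contain boundary vertices. Index the classes as $C_1,\dots,C_k$ with values $\bar r_1,\dots,\bar r_k$ so that $C_1,\dots,C_m$ are those containing boundary vertices, in increasing order of value, and $C_{m+1},\dots,C_k$ are those without boundary vertices, in increasing order of value. Let $B_0$ be a positive integer such that each of $\bar r_{m+1},\dots,\bar r_k$ can be written as $p/q$ with integers $p,q$, $0<q\le B_0$. For $1\le i\le m$ fix a boundary vertex $u_i$ of $C_i$ and for $1\le j\le k$ let $p_{i,j}=\sum_{v'\in E(u_i)\cap C_j}\delta(u_i)(v')$. Let $Q_B=(p_{i,j})_{1\le i,j\le m}$, $Q_C=(p_{i,j})_{1\le i\le m,\,m+1\le j\le k}$, $\bar r_C=(\bar r_{m+1},\dots,\bar r_k)^{T}$, $I$ the $m\times m$ identity matrix, and $\alpha$ the least common multiple of the denominators of the $p_{i,j}$ ($1\le i\le m$, $1\le j\le k$). For $1\le i\le m$ let $N_i$ be the determinant of the matrix obtained from $\alpha(I-Q_B)$ by replacing its $i$-th column with the column vector $\alpha Q_C\bar r_C$. Then, written in lowest terms, $N_i$ has denominator at most $B_0^{k-m}\le B_0^{|V|}$.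
   Context: A stochastic game is $\mathcal{G}=((V,E),(V_1,V_2,V_\Diamond),\delta,w)$: a finite directed graph $(V,E)$ in which every vertex $v$ has a nonempty out-neighbour set $E(v)$, a partition of $V$ into Player 1, Player 2 and probabilistic vertices, a function $\delta$ giving each $v\in V_\Diamond$ a rational probability distribution $\delta(v)$ on $E(v)$, positive on every out-neighbour, and payoffs $w:E\to\mathbb{Q}$. Plays are infinite paths; deterministic strategies of Player $i$ map finite prefixes ending in $V_i$ to an out-neighbour of the last vertex; a strategy pair and initial vertex induce a probability measure on plays. An objective $\varphi$ is a Borel-measurable real function on plays; bounded if $|\varphi|\le W_\varphi$ for an integer $W_\varphi$; prefix-independent if plays with a common suffix get equal value. $\mathbb{E}_v(\varphi)=\sup_{\sigma_1}\inf_{\sigma_2}\mathbb{E}^{\sigma_1,\sigma_2}_v[\varphi]=\inf_{\sigma_2}\sup_{\sigma_1}\mathbb{E}^{\sigma_1,\sigma_2}_v[\varphi]$ (Player 1 maximises, Player 2 minimises). For a real vector $\mathsf r$ indexed by $V$, its classes are the maximal nonempty sets of vertices on which $\mathsf r$ is constant (the constant being the class value); a vertex $v$ of class $C$ is a boundary vertex if $v\in V_\Diamond$ and $E(v)\not\subseteq C$. *)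

From HB Require Import structures.
From mathcomp Require Import all_boot all_order all_algebra.
From mathcomp Require Import all_classical all_reals all_analysis.
Set Implicit Arguments. Unset Strict Implicit. Unset Printing Implicit Defensive.
Import Order.TTheory GRing.Theory Num.Theory.
Local Open Scope classical_set_scope.
Local Open Scope ring_scope.

Inductive owner := Pl1 | Pl2 | Rnd.

Record game (V : finType) := Game {
  gE : rel V;
  gowner : V -> owner;
  gdelta : V -> V -> rat;
  gw : V -> V -> rat;
  gE_nonempty : forall v, exists v', gE v v';
  gdelta_pos : forall v v', gowner v = Rnd -> gE v v' -> (0 < gdelta v v')%R;
  gdelta_sum : forall v, gowner v = Rnd -> (\sum_(v' | gE v v') gdelta v v' = 1)%R }.

Definition playT (V : finType) (v0 : V) : Type := nat -> V.
HB.instance Definition _ (V : finType) (v0 : V) := Choice.on (@playT V v0).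
HB.instance Definition _ (V : finType) (v0 : V) :=
  isPointed.Build (@playT V v0) (fun _ => v0).

Section Game.
Variables (R : realType) (V : finType) (G : game V).
Local Notation playT := (@playT V).

Definition is_play (rho : nat -> V) := forall n, gE G (rho n) (rho n.+1).

Definition cyl (v0 : V) (s : seq V) : set (playT v0) :=
  [set rho | map rho (iota 0 (size s)) = s].
Arguments cyl : clear implicits.
Definition cylinders (v0 : V) : set (set (playT v0)) := range (cyl v0).
Arguments cylinders : clear implicits.

Definition cylT (v0 : V) := g_sigma_algebraType (cylinders v0).
Arguments cylT : clear implicits.

(* deterministic strategies: sigma h x = successor chosen at the prefix
   rcons h x (h = history strictly before the current vertex x) *)
Definition strategy := seq V -> V -> V.
Definition is_strategy (p : owner) (s : strategy) :=
  forall h x, gowner G x = p -> gE G x (s h x).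

Definition trans (s1 s2 : strategy) (h : seq V) (x y : V) : R :=
  match gowner G x with
  | Pl1 => (y == s1 h x)%:R
  | Pl2 => (y == s2 h x)%:R
  | Rnd => if gE G x y then ratr (gdelta G x y) else 0
  end.

Fixpoint pathprob (s1 s2 : strategy) (h : seq V) (x : V) (s : seq V) : R :=
  match s with
  | [::] => 1
  | y :: t => trans s1 s2 h x y * pathprob s1 s2 (rcons h x) y t
  end.

Definition prefprob (s1 s2 : strategy) (v : V) (s : seq V) : R :=
  match s with
  | [::] => 1
  | x :: t => (x == v)%:R * pathprob s1 s2 [::] x t
  end.

Definition induced (s1 s2 : strategy) (v : V) (P : probability (cylT v) R) :=
  forall s, P (cyl v s) = (prefprob s1 s2 v s)%:E.

(* E^{s1,s2}_v [phi] (the induced measure is unique) *)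
Definition expect (phi : (nat -> V) -> R) (s1 s2 : strategy) (v : V) : \bar R :=
  ereal_sup [set (\int[P]_x (phi x)%:E)%E | P in @induced s1 s2 v].

Definition game_value (phi : (nat -> V) -> R) (v : V) : \bar R :=
  ereal_sup [set ereal_inf [set expect phi s1 s2 v | s2 in is_strategy Pl2]
            | s1 in is_strategy Pl1].

Definition objective (phi : (nat -> V) -> R) :=
  forall v0 : V, measurable_fun [set: cylT v0] (phi : cylT v0 -> R).
Definition bounded_obj (phi : (nat -> V) -> R) :=
  exists W : nat, forall rho, is_play rho -> `|phi rho| <= W%:R.
Definition prefix_independent (phi : (nat -> V) -> R) :=
  forall rho rho' (i j : nat), is_play rho -> is_play rho' ->
    (forall n, rho (i + n)%N = rho' (j + n)%N) -> phi rho = phi rho'.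

Definition is_boundary (r : V -> R) (v : V) :=
  gowner G v = Rnd /\ exists v', gE G v v' /\ r v' <> r v.

Definition pcoef (r : V -> R) (u : V) (c : R) : rat :=
  (\sum_(v' | gE G u v' && (r v' == c)) gdelta G u v')%R.

End Game.

From HB Require Import structures.
From mathcomp Require Import all_boot all_order all_algebra.
From mathcomp Require Import all_classical all_reals all_analysis.
Set Implicit Arguments. Unset Strict Implicit. Unset Printing Implicit Defensive.
Import Order.TTheory GRing.Theory Num.Theory.
Local Open Scope ring_scope.

(* Since alpha clears the denominators of Q_B and Q_C, the matrix
   alpha (I - Q_B) is integral, and so is D alpha Q_C r_C, where D <= B0^(k-m)
   is the product of the denominators of the values r_{m+1}, ..., r_k.
   Expanding N_i along its i-th column shows that D N_i is an integer, so the
   reduced denominator of N_i divides D.  Finally k - m <= |V| because the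
   classes C_{m+1}, ..., C_k are disjoint and nonempty. *)

Definition col_set {T : Type} {m n : nat} (A : 'M[T]_(m, n)) (j : 'I_n) (v : 'cV[T]_m) :
    'M[T]_(m, n) :=
  \matrix_(a, b) if b == j then v a ord0 else A a b.

Lemma map_col_set {aT rT : Type} (f : aT -> rT) {m n : nat} (A : 'M[aT]_(m, n)) j v :
  map_mx f (col_set A j v) = col_set (map_mx f A) j (map_mx f v).
Proof. by apply/matrixP => a b; rewrite !mxE; case: eqP. Qed.

Section DetOverSubring.
Context {R : comPzRingType} {S : subringClosed R}.

Lemma det_mxOver {n} (A : 'M[R]_n) : A \is a mxOver S -> \det A \in S.
Proof.
move=> /mxOverP AS; apply: rpred_sum => s _; apply: rpredM; first exact: rpred_sign.
by apply: rpred_prod => j _; apply: AS.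
Qed.

Lemma mulr_det_col_set_mxOver {n} (A : 'M[R]_n) j v d :
  A \is a mxOver S -> d *: v \is a mxOver S -> d * \det (col_set A j v) \in S.
Proof.
move=> AS dvS; rewrite (expand_det_col _ j) mulr_sumr; apply: rpred_sum => a _.
rewrite mulrA; apply: rpredM.
  by have := mxOverP dvS a ord0; rewrite !mxE eqxx.
rewrite /cofactor; apply: rpredM; first exact: rpred_sign.
apply/det_mxOver/mxOverP => x y.
by rewrite !mxE eq_sym (negbTE (neq_lift _ _)); apply: (mxOverP AS).
Qed.

End DetOverSubring.

Lemma natrM_Qint (k : nat) (x : rat) :
  (k%:R * x \is a Num.int) = (`|denq x| %| k)%N.
Proof.
apply/idP/idP => [/intrP [z Hz] | /dvdnP [l ->]].
  have numxk : numq x * k%:Z = z * denq x.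
    apply: (@intr_inj rat); rewrite !intrM numqE -Hz.
    by rewrite mulrC mulrA [_%:~R * x]mulrC.
  have : (`|denq x| %| `|numq x| * k)%N.
    by rewrite -[k]/(`|k%:Z|%N) -abszM numxk abszM dvdn_mull.
  by rewrite Gauss_dvdr // coprime_sym coprime_num_den.
have -> : (l * `|denq x|)%:R * x = l%:R * (numq x)%:~R.
  by rewrite numqE -[in RHS]absz_denq natrM -mulrA [x * _]mulrC.
by rewrite rpredM ?natr_int ?intr_int.
Qed.

Lemma scale_denq_mxOver_int {m n} (M : 'M[rat]_(m, n)) (k : nat) :
  (forall a b, `|denq (M a b)| %| k)%N -> k%:R *: M \is a mxOver Num.int.
Proof. by move=> Mk; apply/mxOverP => a b; rewrite mxE natrM_Qint. Qed.

Lemma denq_frac_le (p : int) (q : nat) :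
  (0 < q)%N -> (`|denq (p%:~R / q%:R)| <= q)%N.
Proof.
move=> q_gt0; apply: (dvdn_leq q_gt0).
by rewrite -natrM_Qint mulrC divfK ?intr_int // pnatr_eq0 -lt0n.
Qed.

Lemma common_denominator_col {n} (x : 'I_n -> rat) (B : nat) :
  (forall j, `|denq (x j)| <= B)%N ->
  exists2 D : nat, (0 < D <= B ^ n)%N & D%:R *: \col_j x j \is a mxOver Num.int.
Proof.
move=> xB; exists (\prod_j `|denq (x j)|)%N.
  rewrite prodn_gt0 => [|j]; last by rewrite absz_gt0 denq_neq0.
  by rewrite -[X in (B ^ X)%N](card_ord n) -prod_nat_const leq_prod.
by apply: scale_denq_mxOver_int => a b; rewrite mxE (bigD1 a) //= dvdn_mulr.
Qed.

Lemma denq_det_col_set_le {n} (A : 'M[rat]_n) j v (D : nat) : (0 < D)%N ->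
  A \is a mxOver Num.int -> D%:R *: v \is a mxOver Num.int ->
  (`|denq (\det (col_set A j v))| <= D)%N.
Proof.
move=> D_gt0 A_int Dv_int; apply: (dvdn_leq D_gt0).
by rewrite -natrM_Qint; apply: mulr_det_col_set_mxOver.
Qed.

Lemma incr_ord_inj {d} {X : porderType d} {n} (g : 'I_n -> X) :
  (forall i j : 'I_n, (i < j)%N -> (g i < g j)%O) -> injective g.
Proof.
move=> gS i j gij; apply: val_inj.
by case: (ssrnat.ltngtP i j) => // /gS; rewrite gij ltxx.
Qed.

Lemma leq_card_of_values {T : finType} {X : Type} (r : T -> X) {n} (g : 'I_n -> X) :
  injective g -> (forall j, exists v, r v = g j) -> (n <= #|T|)%N.
Proof.
move=> ginj /choice [w rw]; rewrite -[n]card_ord; apply: (leq_card w).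
by move=> j1 j2 wj; apply: ginj; rewrite -!rw wj.
Qed.

Theorem proposition14 (R : realType) (V : finType) (G : game V)
  (phi : (nat -> V) -> R)
  (Hphi : objective phi) (Hbd : bounded_obj G phi)
  (Hpi : prefix_independent G phi)
  (r : V -> R) (Hr : forall v, (r v)%:E = game_value G phi v)
  (m n : nat) (rB : 'I_m -> R) (rC : 'I_n -> R)
  (Hm : (0 < m)%N)
  (HBcls : forall i, exists v, r v = rB i /\ is_boundary G r v)
  (HCcls : forall j, exists v, r v = rC j)
  (HCnb : forall j v, r v = rC j -> ~ is_boundary G r v)
  (Hcover : forall v, (exists i, r v = rB i) \/ (exists j, r v = rC j))
  (HBinc : forall i j : 'I_m, (i < j)%N -> rB i < rB j)
  (HCinc : forall i j : 'I_n, (i < j)%N -> rC i < rC j)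
  (B0 : nat) (HB0 : (0 < B0)%N)
  (HrC : forall j, exists (p : int) (q : nat),
           (0 < q <= B0)%N /\ rC j = p%:~R / q%:R)
  (u : 'I_m -> V) (Hu : forall i, is_boundary G r (u i) /\ r (u i) = rB i) :
  let QB : 'M[rat]_m := \matrix_(i, j) pcoef G r (u i) (rB j) in
  let QC : 'M[rat]_(m, n) := \matrix_(i, j) pcoef G r (u i) (rC j) in
  let alpha : nat :=
    lcmn (\big[lcmn/1%N]_(i < m) \big[lcmn/1%N]_(j < m) `|denq (QB i j)|%N)
         (\big[lcmn/1%N]_(i < m) \big[lcmn/1%N]_(j < n) `|denq (QC i j)|%N) in
  let A : 'M[R]_m := alpha%:R *: (1%:M - map_mx ratr QB) in
  let c : 'cV[R]_m := alpha%:R *: (map_mx ratr QC *m \col_j rC j) in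
  forall i : 'I_m,
    exists q : rat,
      \det (\matrix_(a, b) if b == i then c a ord0 else A a b) = ratr q /\
      (denq q <= (B0 ^ n)%N%:Z) /\ (B0 ^ n <= B0 ^ #|V|)%N.
Proof.
move=> QB QC alpha A c i.
have /choice [x xP] : forall j, exists y : rat,
    rC j = ratr y /\ (`|denq y| <= B0)%N.
  move=> j; have [p [q [/andP [q_gt0 qB0] ->]]] := HrC j.
  exists (p%:~R / q%:R); split; first by rewrite fmorph_div rmorph_int rmorph_nat.
  exact: leq_trans (denq_frac_le p q_gt0) qB0.
have [D /andP [D_gt0 DB0] Dx_int] := common_denominator_col (fun j => (xP j).2).
have alphaB a b : (`|denq (QB a b)| %| alpha)%N.
  apply: dvdn_trans (dvdn_lcml _ _).
  by apply: (biglcmn_sup a) => //; apply: (biglcmn_sup b).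
have alphaC a b : (`|denq (QC a b)| %| alpha)%N.
  apply: dvdn_trans (dvdn_lcmr _ _).
  by apply: (biglcmn_sup a) => //; apply: (biglcmn_sup b).
pose A' : 'M[rat]_m := alpha%:R *: (1%:M - QB).
pose c' : 'cV[rat]_m := alpha%:R *: (QC *m \col_j x j).
have A'_int : A' \is a mxOver Num.int.
  apply/mxOverP => a b; rewrite mxE [X in _ * X]mxE [X in _ + X]mxE mulrBr.
  by apply: rpredB; [rewrite mxE rpredM ?natr_int | rewrite natrM_Qint alphaB].
have c'_int : D%:R *: c' \is a mxOver Num.int.
  rewrite /c' scalemxAl scalemxAr; apply: mxOverM Dx_int.
  exact: scale_denq_mxOver_int.
have map_A'c' : map_mx ratr (col_set A' i c') = col_set A i c.
  rewrite map_col_set !map_mxZ map_mxB map_mx1 map_mxM rmorph_nat; congr col_set.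
  by congr (_ *: (_ *m _)); apply/matrixP => a b; rewrite !mxE (xP a).1.
exists (\det (col_set A' i c')); split; first by rewrite -det_map_mx map_A'c'.
split.
  rewrite -absz_denq lez_nat; apply: (leq_trans _ DB0).
  exact: (denq_det_col_set_le i D_gt0 A'_int c'_int).
by rewrite leq_pexp2l // (leq_card_of_values (incr_ord_inj HCinc) HCcls).
Qed.
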